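(* Assume $\ker(K)\cap\ker(D)=\{0\}$ and fix $\delta\ge0$ and data $y^\delta$. Let $\{\Psi_k\}_{k\in\mathbb{N}}$ be a sequence of reconstructors and $\Psi^*$ a reconstructor such that $\sup_{y\in\mathcal{Y}^\delta}\|\Psi_k(y)-\Psi^*(y)\|_1\to0$ as $k\to\infty$, where $\mathcal{Y}^\delta=\{y\in\mathbb{R}^m:\inf_{x\in\mathcal{X}}\|Kx-y\|_2\le\delta\}$. For each $k$ let $x^*_{\Psi_k,\delta}$ be the unique minimizer over $\mathcal{X}$ of $\mathcal{J}_{\Psi_k,\delta}(x)=\|Kx-y^\delta\|_2^2+\lambda\|w(\Psi_k(y^\delta))\odot|Dx|\|_1$, and let $x^*_{\Psi^*,\delta}$ denote the unique minimizer over $\mathcal{X}$ of $\mathcal{J}_{\Psi^*,\delta}(x)=\|Kx-y^\delta\|_2^2+\lambda\|w(\Psi^*(y^\delta))\odot|Dx|\|_1$. Then $\{x^*_{\Psi_k,\delta}\}_{k\in\mathbb{N}}$ has a convergent subsequence whose limit is $x^*_{\Psi^*,\delta}$.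
   Context: Let $K\in\mathbb{R}^{m\times n}$ with $m\le n$, and let $D_h,D_v\in\mathbb{R}^{n\times n}$ be the discrete horizontal and vertical difference operators; $Dx=\begin{bmatrix}D_hx\\ D_vx\end{bmatrix}\in\mathbb{R}^{2n}$, and $|Dx|\in\mathbb{R}^n$, $(|Dx|)_i=\sqrt{(D_hx)_i^2+(D_vx)_i^2}$. $\mathcal{X}=\{x\in\mathbb{R}^n: x_i\ge 0\ \forall i\}$. Fix $\lambda>0$, $\eta>0$, $p\in(0,1)$, and for $\tilde x\in\mathbb{R}^n$ define $(w(\tilde{x}))_i=\big(\eta/\sqrt{\eta^2+(|D\tilde{x}|)_i^2}\big)^{1-p}$. A reconstructor is a Lipschitz continuous map $\Psi:\mathbb{R}^m\to\mathbb{R}^n$. The data is $y^\delta=Kx^{GT}+e$ with $x^{GT}\in\mathcal{X}$ and $\|e\|_2\le\delta$. $\odot$ is the entrywise product. *)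

From HB Require Import structures.
From mathcomp Require Import all_boot all_order all_algebra.
From mathcomp Require Import all_classical all_reals all_analysis.
Set Implicit Arguments. Unset Strict Implicit. Unset Printing Implicit Defensive.
Import Order.TTheory GRing.Theory Num.Theory.
Import numFieldNormedType.Exports.
Local Open Scope classical_set_scope.
Local Open Scope ring_scope.

Section Defs.
Variable R : realType.

Definition norm2 {k : nat} (v : 'cV[R]_k) : R := Num.sqrt (\sum_i (v i 0) ^+ 2).
Definition norm1 {k : nat} (v : 'cV[R]_k) : R := \sum_i `|v i 0|.

Definition Xset (n : nat) : set 'cV[R]_n := [set x | forall i, 0 <= x i 0].
Arguments Xset n : clear implicits.

(* |Dx| in R^n, with Dx = [D_h x ; D_v x] *)
Definition absD {n : nat} (Dh Dv : 'M[R]_n) (x : 'cV[R]_n) : 'cV[R]_n :=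
  \col_i Num.sqrt (((Dh *m x) i 0) ^+ 2 + ((Dv *m x) i 0) ^+ 2).

Definition weight {n : nat} (Dh Dv : 'M[R]_n) (eta p : R) (xt : 'cV[R]_n) : 'cV[R]_n :=
  \col_i ((eta / Num.sqrt (eta ^+ 2 + (absD Dh Dv xt i 0) ^+ 2)) `^ (1 - p)).

Definition Jfun {m n : nat} (K : 'M[R]_(m, n)) (Dh Dv : 'M[R]_n) (lam eta p : R)
  (Psi : 'cV[R]_m -> 'cV[R]_n) (y : 'cV[R]_m) (x : 'cV[R]_n) : R :=
  (norm2 (K *m x - y)) ^+ 2 +
  lam * norm1 (\col_i (weight Dh Dv eta p (Psi y) i 0 * absD Dh Dv x i 0)).

Definition reconstructor {m n : nat} (Psi : 'cV[R]_m -> 'cV[R]_n) : Prop :=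
  exists L : R, forall y1 y2, norm2 (Psi y1 - Psi y2) <= L * norm2 (y1 - y2).

Definition Ydelta {m n : nat} (K : 'M[R]_(m, n)) (delta : R) : set 'cV[R]_m :=
  [set y | inf [set norm2 (K *m x - y) | x in Xset n] <= delta].

Definition minimizer_on {n : nat} (f : 'cV[R]_n -> R) (x : 'cV[R]_n) : Prop :=
  Xset n x /\ forall z, Xset n z -> f x <= f z.

Definition unique_minimizer_on {n : nat} (f : 'cV[R]_n -> R) (x : 'cV[R]_n) : Prop :=
  minimizer_on f x /\ forall z, minimizer_on f z -> z = x.

End Defs.
Arguments Xset {R} n.

From HB Require Import structures.
From mathcomp Require Import all_boot all_order all_algebra.
From mathcomp Require Import all_classical all_reals all_analysis.
From mathcomp Require Import lra.
Import Order.TTheory GRing.Theory Num.Theory.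
Import numFieldNormedType.Exports.
Local Open Scope classical_set_scope.
Local Open Scope ring_scope.

Set Implicit Arguments. Unset Strict Implicit. Unset Printing Implicit Defensive.

(* Since J_k(x_k) <= J_k(0) = ||y||^2, the residuals K x_k and the weighted
   total variations w_k |D x_k| are bounded; the weights w_k converge to the
   strictly positive w(Psi*(y)), so eventually |D x_k| is bounded as well.
   The kernel condition makes x |-> (Kx, D_h x, D_v x) injective, hence left
   invertible, so the x_k are bounded and have a convergent subsequence.  Its
   limit minimizes J_{Psi*} because J_k -> J_{Psi*} jointly in (w, x), and by
   uniqueness it is x*_{Psi*}. *)

Section RealSequences.
Variable R : realType.

Lemma cvg_sum (I : finType) (f : I -> nat -> R) (a : I -> R) :
  (forall i, f i k @[k --> \oo] --> a i) ->
  \sum_i f i k @[k --> \oo] --> \sum_i a i.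
Proof.
move=> fa; apply: cvg_big; first exact: add_continuous.
by move=> i _; exact: fa.
Qed.

Lemma cvg_sqr (f : nat -> R) (a : R) :
  f @ \oo --> a -> f k ^+ 2 @[k --> \oo] --> a ^+ 2.
Proof. by move=> fa; under eq_cvg do rewrite expr2; rewrite expr2; exact: cvgM. Qed.

Lemma cvg_powR (f : nat -> R) (a r : R) : 0 < a -> f @ \oo --> a ->
  f k `^ r @[k --> \oo] --> a `^ r.
Proof.
move=> a_gt0 fa.
have powR_cont : {for a, continuous (fun x : R => x `^ r)}.
  apply/differentiable_continuous/derivable1_diffP/derivable_powR.
  by rewrite in_itv /= a_gt0.
exact: continuous_cvg powR_cont fa.
Qed.

End RealSequences.

Section CoordinateConvergence.
Variable R : realType.

Definition coord_cvg n (u : nat -> 'cV[R]_n) (v : 'cV[R]_n) :=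
  forall i, (fun k => u k i 0) @ \oo --> v i 0.

Lemma coord_cvg_cst n (v : 'cV[R]_n) : coord_cvg (fun=> v) v.
Proof. by move=> i; exact: cvg_cst. Qed.

Lemma coord_cvg_mulmx m n (M : 'M[R]_(m, n)) u v :
  coord_cvg u v -> coord_cvg (fun k => M *m u k) (M *m v).
Proof.
move=> uv i; rewrite mxE; under eq_cvg do rewrite mxE.
by apply: cvg_sum => j; exact: cvgMl_tmp (uv j).
Qed.

Lemma cvgn_increasing (phi : nat -> nat) :
  (forall k, (phi k < phi k.+1)%N) -> phi @ \oo --> \oo.
Proof.
move=> phi_incr.
have phi_ge k : (k <= phi k)%N by elim: k => // k IHk; exact: leq_ltn_trans IHk _.
move=> P [N _ NP]; exists N => // k /= Nk.
exact/NP/(leq_trans Nk (phi_ge k)).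
Qed.

Lemma coord_cvg_subseq n (u : nat -> 'cV[R]_n) v (phi : nat -> nat) :
  (forall k, (phi k < phi k.+1)%N) ->
  coord_cvg u v -> coord_cvg (fun k => u (phi k)) v.
Proof. by move=> /cvgn_increasing phi_oo uv i; exact: cvg_comp phi_oo (uv i). Qed.

Lemma coord_cvg_cvg n (u : nat -> 'cV[R]_n) v : coord_cvg u v -> u @ \oo --> v.
Proof.
move=> uv; apply/cvg_mx_entourageP => A entA.
apply: filter_forall => i; apply: filter_forall => j; rewrite (ord1 j).
have /cvg_entourageP/(_ A entA) uvA := uv i.
have {}uvA : \forall k \near \oo, A (v i 0, u k i 0) := uvA.
by apply: filterS uvA => k; exact: mem_set.
Qed.

Definition coord_bounded n (u : nat -> 'cV[R]_n) :=
  forall i, exists M, forall k, `|u k i 0| <= M.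

Lemma coord_bounded_col_mx m1 m2 (a : nat -> 'cV[R]_m1) (b : nat -> 'cV[R]_m2) :
  coord_bounded a -> coord_bounded b ->
  coord_bounded (fun k => col_mx (a k) (b k)).
Proof.
move=> a_bnd b_bnd l; rewrite -(fintype.splitK l); case: (fintype.split l) => i /=.
  by have [M aM] := a_bnd i; exists M => k; rewrite col_mxEu.
by have [M bM] := b_bnd i; exists M => k; rewrite col_mxEd.
Qed.

Lemma coord_bounded_subseq_cvgn n (u : nat -> 'cV[R]_n) : coord_bounded u ->
  forall j, exists phi : nat -> nat, (forall k, (phi k < phi k.+1)%N) /\
    forall i : 'I_n, (i < j)%N -> cvgn (fun k => u (phi k) i 0).
Proof.
move=> u_bnd; elim=> [|j [phi [phi_incr phi_cvg]]]; first by exists id.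
have [jn|nj] := ltnP j n; last first.
  by exists phi; split => // i ij; apply/phi_cvg/(leq_trans (ltn_ord i)).
pose j' := Ordinal jn.
have [M uM] := u_bnd j'.
have bnd : bounded_fun (fun k => u (phi k) j' 0).
  exists M; split; first exact: num_real.
  by move=> M' MM' k _; exact: le_trans (uM _) (ltW MM').
have [f /increasing_seqP f_incr f_cvg] := bolzano_weierstrass bnd.
exists (phi \o f); split.
  by move=> k; exact: homo_ltn ltn_trans phi_incr _ _ (f_incr k).
move=> i; rewrite ltnS leq_eqVlt => /orP[/eqP ij|ij].
  by have -> : i = j' by apply: val_inj.
have /cvg_ex[l ul] := phi_cvg i ij.
by apply/cvg_ex; exists l; exact: cvg_comp (cvgn_increasing f_incr) ul.
Qed.

Lemma bolzano_weierstrass_cV n (u : nat -> 'cV[R]_n) : coord_bounded u ->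
  exists phi : nat -> nat, (forall k, (phi k < phi k.+1)%N) /\
    exists v, coord_cvg (fun k => u (phi k)) v.
Proof.
move=> /coord_bounded_subseq_cvgn/(_ n)[phi [phi_incr phi_cvg]].
exists phi; split => //; exists (\col_i lim ((fun k => u (phi k) i 0) @ \oo)).
by move=> i; rewrite mxE; exact: phi_cvg.
Qed.

Lemma coord_cvg_ge_half n (u : nat -> 'cV[R]_n) v :
  coord_cvg u v -> (forall i, 0 < v i 0) ->
  \forall k \near \oo, forall i, v i 0 / 2 <= u k i 0.
Proof.
move=> uv v_gt0; apply: filter_forall => i.
have /cvgrPdist_le/(_ (v i 0 / 2)) := uv i.
rewrite divr_gt0 // => /(_ isT); apply: filterS => k.
rewrite ler_norml => /andP[_]; lra.
Qed.

End CoordinateConvergence.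

Section ColumnNorms.
Variable R : realType.

Lemma norm2_sq k (v : 'cV[R]_k) : norm2 v ^+ 2 = \sum_i v i 0 ^+ 2.
Proof. by rewrite sqr_sqrtr // sumr_ge0 // => i _; exact: sqr_ge0. Qed.

Lemma norm2N k (v : 'cV[R]_k) : norm2 (- v) = norm2 v.
Proof. by rewrite /norm2; under eq_bigr do rewrite mxE sqrrN. Qed.

Lemma ler_norm2_coord k (v : 'cV[R]_k) i : `|v i 0| <= norm2 v.
Proof.
rewrite -sqrtr_sqr ler_wsqrtr // (bigD1 i) //= lerDl.
by apply: sumr_ge0 => j _; exact: sqr_ge0.
Qed.

Lemma norm1_ge0 k (v : 'cV[R]_k) : 0 <= norm1 v.
Proof. exact: sumr_ge0. Qed.

Lemma ler_norm1_coord k (v : 'cV[R]_k) i : `|v i 0| <= norm1 v.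
Proof. by rewrite /norm1 (bigD1 i) //= lerDl; exact: sumr_ge0. Qed.

End ColumnNorms.

Lemma Ydelta_noisy_data (R : realType) m n (K : 'M[R]_(m, n)) delta xGT e :
  Xset n xGT -> norm2 e <= delta -> Ydelta K delta (K *m xGT + e).
Proof.
move=> XxGT; apply: le_trans; rewrite -norm2N -[- e]add0r -(subrr (K *m xGT)).
rewrite -addrA -opprD; apply: ge_inf; last by exists xGT.
by exists 0 => _ [x _ <-]; exact: sqrtr_ge0.
Qed.

Lemma coord_cvg_unif_norm1 (R : realType) m n (A : set 'cV[R]_m)
    (Psi : nat -> 'cV[R]_m -> 'cV[R]_n) PsiS y :
  (forall eps : R, 0 < eps -> exists N : nat, forall k : nat, (N <= k)%N ->
     forall y, A y -> norm1 (Psi k y - PsiS y) <= eps) ->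
  A y -> coord_cvg (fun k => Psi k y) (PsiS y).
Proof.
move=> unif Ay i; apply/cvgrPdist_le => eps eps_gt0.
have [N PsiN] := unif eps eps_gt0; exists N => // k /= Nk.
apply: le_trans (PsiN k Nk y Ay); apply: le_trans (ler_norm1_coord _ i).
by rewrite distrC !mxE.
Qed.

Section Weights.
Variables (R : realType) (n : nat) (Dh Dv : 'M[R]_n) (eta p : R).

Lemma absD0 : absD Dh Dv 0 = 0.
Proof. by apply/matrixP => i j; rewrite /absD !mulmx0 !mxE expr0n addr0 sqrtr0. Qed.

Lemma absD_ge0 x i : 0 <= absD Dh Dv x i 0.
Proof. by rewrite mxE sqrtr_ge0. Qed.

Lemma ler_Dh_absD x i : `|(Dh *m x) i 0| <= absD Dh Dv x i 0.
Proof. by rewrite -sqrtr_sqr [X in _ <= X]mxE ler_wsqrtr // lerDl sqr_ge0. Qed.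

Lemma ler_Dv_absD x i : `|(Dv *m x) i 0| <= absD Dh Dv x i 0.
Proof. by rewrite -sqrtr_sqr [X in _ <= X]mxE ler_wsqrtr // lerDr sqr_ge0. Qed.

Lemma coord_cvg_absD u v :
  coord_cvg u v -> coord_cvg (fun k => absD Dh Dv (u k)) (absD Dh Dv v).
Proof.
move=> uv i; rewrite mxE; under eq_cvg do rewrite mxE.
apply: continuous_cvg; first exact: sqrt_continuous.
by apply: cvgD; apply: cvg_sqr; exact: coord_cvg_mulmx.
Qed.

Hypothesis eta_gt0 : 0 < eta.

Let weight_den_gt0 x i : 0 < Num.sqrt (eta ^+ 2 + absD Dh Dv x i 0 ^+ 2).
Proof. by rewrite sqrtr_gt0 ltr_wpDr ?sqr_ge0 ?exprn_gt0. Qed.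

Lemma weight_gt0 x i : 0 < weight Dh Dv eta p x i 0.
Proof. by rewrite mxE powR_gt0 // divr_gt0. Qed.

Lemma coord_cvg_weight u v : coord_cvg u v ->
  coord_cvg (fun k => weight Dh Dv eta p (u k)) (weight Dh Dv eta p v).
Proof.
move=> uv i; rewrite mxE; under eq_cvg do rewrite mxE.
apply: cvg_powR; first by rewrite divr_gt0.
apply: cvgMl_tmp; apply: cvgV; first by rewrite gt_eqF.
apply: continuous_cvg; first exact: sqrt_continuous.
by apply: cvgD; [exact: cvg_cst | apply: cvg_sqr; exact: coord_cvg_absD].
Qed.

End Weights.

Lemma mx_left_inverse (F : fieldType) p n (A : 'M[F]_(p, n)) :
  (forall x : 'cV[F]_n, A *m x = 0 -> x = 0) -> exists B, B *m A = 1%:M.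
Proof.
move=> A_inj; apply/row_fullP.
rewrite /row_full -mxrank_tr -/(row_free A^T) -kermx_eq0.
apply/eqP/row_matrixP => i; rewrite row0.
have kerA : A *m (row i (kermx A^T))^T = 0.
  by apply: trmx_inj; rewrite trmx_mul trmxK -row_mul mulmx_ker row0 trmx0.
by rewrite -[row i _]trmxK (A_inj _ kerA) trmx0.
Qed.

Section WeightedObjective.
Variables (R : realType) (m n : nat) (K : 'M[R]_(m, n)) (Dh Dv : 'M[R]_n).
Variables (lam : R) (y : 'cV[R]_m).

(* [Jfun K Dh Dv lam eta p Psi y] is convertible to
   [Jw (weight Dh Dv eta p (Psi y))]. *)
Definition Jw (w x : 'cV[R]_n) : R :=
  norm2 (K *m x - y) ^+ 2 + lam * norm1 (\col_i (w i 0 * absD Dh Dv x i 0)).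

Lemma Jw0 w : Jw w 0 = norm2 y ^+ 2.
Proof.
rewrite /Jw mulmx0 sub0r norm2N absD0 /norm1 big1 ?mulr0 ?addr0 // => i _.
by rewrite !mxE mulr0 normr0.
Qed.

Lemma cvg_Jw ws w xs x : coord_cvg ws w -> coord_cvg xs x ->
  Jw (ws k) (xs k) @[k --> \oo] --> Jw w x.
Proof.
move=> wsw xsx; rewrite /Jw norm2_sq; under eq_cvg do rewrite norm2_sq.
apply: cvgD.
  apply: cvg_sum => i; apply: cvg_sqr.
  have subE (z : 'cV[R]_m) : (z - y) i 0 = z i 0 - y i 0 by rewrite !mxE.
  rewrite subE; under eq_cvg do rewrite subE.
  by apply: cvgB; [exact: coord_cvg_mulmx | exact: cvg_cst].
apply: cvgMl_tmp; apply: cvg_sum => i; rewrite mxE; under eq_cvg do rewrite mxE.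
by apply: cvg_norm; apply: cvgM; [exact: wsw | exact: coord_cvg_absD].
Qed.

Lemma minimizer_on_limit ws w xs x :
  coord_cvg ws w -> coord_cvg xs x ->
  (forall k, minimizer_on (Jw (ws k)) (xs k)) -> minimizer_on (Jw w) x.
Proof.
move=> wsw xsx xs_min; split.
  move=> i; apply: (ler_cvg_to (cvg_cst 0) (xsx i)).
  by apply: nearW => k; exact: (xs_min k).1.
move=> z Xz; have := ler_cvg_to (cvg_Jw wsw xsx)
  (cvg_Jw wsw (coord_cvg_cst (v := z))).
by apply; apply: nearW => k; exact: (xs_min k).2.
Qed.

Hypothesis lam_gt0 : 0 < lam.

Lemma minimizer_Jw_le w x : minimizer_on (Jw w) x -> Jw w x <= norm2 y ^+ 2.
Proof. by move=> [_ x_min]; rewrite -(Jw0 w); apply: x_min => i; rewrite mxE. Qed.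

Lemma minimizer_Kmx_bound w x i : minimizer_on (Jw w) x ->
  `|(K *m x) i 0| <= 2 * norm2 y.
Proof.
move=> /minimizer_Jw_le; rewrite /Jw => Jle.
have res_le : norm2 (K *m x - y) <= norm2 y.
  rewrite -ler_sqr ?nnegrE ?sqrtr_ge0 //.
  apply: le_trans Jle; rewrite lerDl.
  exact: mulr_ge0 (ltW lam_gt0) (norm1_ge0 _).
rewrite -[K *m x](subrK y) mxE; apply: le_trans (ler_normD _ _) _.
have := ler_norm2_coord (K *m x - y) i; have := ler_norm2_coord y i; lra.
Qed.

Lemma minimizer_absD_bound w x c i : minimizer_on (Jw w) x ->
  0 < c -> c <= w i 0 -> absD Dh Dv x i 0 <= norm2 y ^+ 2 / (lam * c).
Proof.
move=> /minimizer_Jw_le; rewrite /Jw => Jle c_gt0 cw.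
set a := absD Dh Dv x i 0; have a_ge0 : 0 <= a := absD_ge0 _ _ _ _.
have wa_le : w i 0 * a <= norm1 (\col_i (w i 0 * absD Dh Dv x i 0)).
  by apply: le_trans (ler_norm1_coord _ i); rewrite mxE ler_norm.
rewrite ler_pdivlMr ?mulr_gt0 //.
have := ler_wpM2l (ltW lam_gt0) (le_trans (ler_wpM2r a_ge0 cw) wa_le).
have := sqr_ge0 (norm2 (K *m x - y)); lra.
Qed.

Hypothesis ker_trivial : forall x : 'cV[R]_n,
  K *m x = 0 -> Dh *m x = 0 -> Dv *m x = 0 -> x = 0.

Lemma minimizers_cluster ws w xs :
  coord_cvg ws w -> (forall i, 0 < w i 0) ->
  (forall k, minimizer_on (Jw (ws k)) (xs k)) ->
  exists phi : nat -> nat, (forall k, (phi k < phi k.+1)%N) /\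
    exists v, coord_cvg (fun k => xs (phi k)) v.
Proof.
move=> wsw w_gt0 xs_min.
pose A := col_mx K (col_mx Dh Dv).
have [B BA] : exists B, B *m A = 1%:M.
  apply: mx_left_inverse => x; rewrite !mul_col_mx => /eqP.
  by rewrite !col_mx_eq0 => /and3P[/eqP Kx /eqP Dhx /eqP Dvx]; exact: ker_trivial.
have [N _ wsN] := coord_cvg_ge_half wsw w_gt0.
have Dmx_bounded (D : 'M[R]_n) :
    (forall x i, `|(D *m x) i 0| <= absD Dh Dv x i 0) ->
    coord_bounded (fun k => D *m xs (k + N)).
  move=> D_absD i; exists (norm2 y ^+ 2 / (lam * (w i 0 / 2))) => k.
  apply: le_trans (D_absD _ i) (minimizer_absD_bound (xs_min _) _ _).
    by rewrite divr_gt0.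
  exact: wsN (leq_addl _ _) i.
have Amx_bounded : coord_bounded (fun k => A *m xs (k + N)).
  have -> : (fun k => A *m xs (k + N)) = fun k =>
      col_mx (K *m xs (k + N)) (col_mx (Dh *m xs (k + N)) (Dv *m xs (k + N))).
    by apply/funext => k; rewrite !mul_col_mx.
  apply: coord_bounded_col_mx.
    by move=> i; exists (2 * norm2 y) => k; exact: minimizer_Kmx_bound (xs_min _).
  by apply: coord_bounded_col_mx; apply: Dmx_bounded;
    [exact: ler_Dh_absD | exact: ler_Dv_absD].
have [phi [phi_incr [z z_cvg]]] := bolzano_weierstrass_cV Amx_bounded.
exists (fun k => phi k + N); split; first by move=> k; rewrite ltn_add2r.
exists (B *m z).
have -> : (fun k => xs (phi k + N)) = fun k => B *m (A *m xs (phi k + N)).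
  by apply/funext => k; rewrite mulmxA BA mul1mx.
exact: coord_cvg_mulmx.
Qed.

End WeightedObjective.

Theorem theorem4 (R : realType) (m n : nat) (K : 'M[R]_(m, n)) (Dh Dv : 'M[R]_n)
  (lam eta p delta : R) (xGT : 'cV[R]_n) (e y_delta : 'cV[R]_m)
  (Psi : nat -> 'cV[R]_m -> 'cV[R]_n) (PsiS : 'cV[R]_m -> 'cV[R]_n)
  (xk : nat -> 'cV[R]_n) (xS : 'cV[R]_n) :
  (m <= n)%N ->
  0 < lam -> 0 < eta -> 0 < p -> p < 1 ->
  (forall x : 'cV[R]_n, K *m x = 0 -> Dh *m x = 0 -> Dv *m x = 0 -> x = 0) ->
  0 <= delta ->
  Xset n xGT -> norm2 e <= delta -> y_delta = K *m xGT + e ->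
  (forall k, reconstructor (Psi k)) -> reconstructor PsiS ->
  (forall eps : R, 0 < eps -> exists N : nat, forall k : nat, (N <= k)%N ->
     forall y, Ydelta K delta y -> norm1 (Psi k y - PsiS y) <= eps) ->
  (forall k, unique_minimizer_on (Jfun K Dh Dv lam eta p (Psi k) y_delta) (xk k)) ->
  unique_minimizer_on (Jfun K Dh Dv lam eta p PsiS y_delta) xS ->
  exists phi : nat -> nat, (forall k, (phi k < phi k.+1)%N) /\
    ((fun k => xk (phi k)) @ \oo --> xS).
Proof.
move=> _ lam_gt0 eta_gt0 _ _ ker_trivial _ XxGT e_le y_def _ _ unif xk_min xS_min.
have y_in : Ydelta K delta y_delta by rewrite y_def; exact: Ydelta_noisy_data.
have w_cvg : coord_cvg (fun k => weight Dh Dv eta p (Psi k y_delta))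
                       (weight Dh Dv eta p (PsiS y_delta)).
  exact/coord_cvg_weight/(coord_cvg_unif_norm1 unif y_in).
have xk_minimizer k := (xk_min k).1.
have [phi [phi_incr [v v_cvg]]] := minimizers_cluster lam_gt0 ker_trivial
  w_cvg (weight_gt0 Dh Dv p eta_gt0 _) xk_minimizer.
have v_min := minimizer_on_limit (coord_cvg_subseq phi_incr w_cvg) v_cvg
  (fun k => xk_minimizer (phi k)).
exists phi; split => //.
by rewrite -(xS_min.2 v v_min); exact: coord_cvg_cvg.
Qed.
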